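(* Let $\mathcal{X}$ be a finite set, $\phi\notin\mathcal{X}$, $L,T\in\mathbb{N}$, positions $i_0,\dots,i_{T-1}\in\{0,\dots,L-1\}$ fixed, and $\Pi_t$ ($t=0,\dots,T-1$) probability distributions on $\mathcal{X}\cup\{\phi\}$. Let $X_0\sim P^*$ on $\mathcal{X}^L$, let $Z_0,\dots,Z_{T-1}$ be independent, independent of $X_0$, with $Z_t\sim\Pi_t$, and define the forward process by $X_{t+1,j}=X_{t,j}$ for $j\ne i_t$, $X_{t+1,i_t}=X_{t,i_t}$ if $Z_t=\phi$, and $X_{t+1,i_t}=Z_t$ if $Z_t\in\mathcal{X}$. Then for any $t\in\{0,\dots,T-1\}$, any $x\in\mathcal{X}^L$ and any $a\in\mathcal{X}$ (for which the quantities below are well defined, i.e. $\mathbb{P}(Z_t=\phi)>0$ and the conditioning events and the denominator are nonzero), $$\mathbb{P}\big(X_{t,i_t}=a\mid X_{t+1,-i_t}=x_{-i_t}\big)=\frac{\mathbb{P}(Z_t=a)}{\mathbb{P}(Z_t=\phi)}\left(\frac{1}{\mathbb{P}\big(Z_t=a\mid X_{t+1,-i_t}=x_{-i_t},\,X_{t+1,i_t}=a\big)}-1\right).$$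
   Context: For $x\in\mathcal{X}^L$ and $i\in\{0,\dots,L-1\}$, $x_i$ is the $i$-th coordinate and $x_{-i}\in\mathcal{X}^{L-1}$ is the sequence obtained by deleting the $i$-th coordinate. *)

From mathcomp Require Import all_boot all_order all_algebra.
Set Implicit Arguments. Unset Strict Implicit. Unset Printing Implicit Defensive.
Import Order.TTheory GRing.Theory Num.Theory.
Local Open Scope ring_scope.

Section Forward.
Variables (R : realFieldType) (X : finType) (L T : nat).
(* The extra symbol phi is modelled as [None] in [option X]. *)
Variable pos : 'I_T -> 'I_L.
Variable Pstar : {ffun 'I_L -> X} -> R.
Variable Pi : 'I_T -> option X -> R.

(* Sample space: (X_0, (Z_0,...,Z_{T-1})), with product weight, i.e.
   X_0 ~ P*, Z_t ~ Pi_t, all mutually independent. *)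
Definition Omega := ({ffun 'I_L -> X} * {ffun 'I_T -> option X})%type.

Definition weight (w : Omega) : R := Pstar w.1 * \prod_(t < T) Pi t (w.2 t).

Definition Pr (E : pred Omega) : R := \sum_(w : Omega | E w) weight w.

Definition cond_Pr (A B : pred Omega) : R :=
  Pr (fun w => A w && B w) / Pr B.

Definition step (t : 'I_T) (x : {ffun 'I_L -> X}) (z : option X)
  : {ffun 'I_L -> X} :=
  [ffun j => if j == pos t then
               (match z with Some a => a | None => x j end)
             else x j].

(* X_k as a function of the outcome, for k <= T. *)
Fixpoint state (k : nat) (w : Omega) : {ffun 'I_L -> X} :=
  match k with
  | 0 => w.1
  | k'.+1 =>
      match insub k' : option 'I_T with
      | Some t => step t (state k' w) (w.2 t)
      | None => state k' w
      end
  end.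

End Forward.

(* x_{-i}: the sequence obtained by deleting the i-th coordinate. *)
Definition del (X : Type) (L : nat) (i : 'I_L) (x : {ffun 'I_L -> X}) : seq X :=
  [seq x j | j <- enum 'I_L & j != i].

(* The noise Z_t is independent of X_t, which depends only on X_0 and
   Z_0, ..., Z_{t-1}; and X_{t+1,-i_t} = X_{t,-i_t}.  Writing D for the event
   X_{t,-i_t} = x_{-i_t}, this gives
     P(X_{t+1,-i_t} = x_{-i_t}, X_{t+1,i_t} = a)
       = P(Z_t = phi) P(D, X_{t,i_t} = a) + P(Z_t = a) P(D),
     P(Z_t = a, X_{t+1,-i_t} = x_{-i_t}, X_{t+1,i_t} = a) = P(Z_t = a) P(D),
   and the claimed identity is then Bayes' formula. *)
From mathcomp Require Import all_boot all_order all_algebra.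
From mathcomp.algebra_tactics Require Import ring.
Set Implicit Arguments. Unset Strict Implicit. Unset Printing Implicit Defensive.
Import Order.TTheory GRing.Theory Num.Theory.
Local Open Scope ring_scope.

Lemma odds_identity (R : fieldType) (pN pA c e d : R) :
  pN * c != 0 -> pA * d != 0 -> pN * e + pA * d != 0 ->
  e / d = pA * c / (pN * c) * ((pA * d / (pN * e + pA * d))^-1 - 1).
Proof.
rewrite !mulf_eq0 !negb_or => /andP[pN0 c0] /andP[pA0 d0] ed0.
by field; rewrite pN0 c0 pA0 d0 ed0.
Qed.

Section ForwardProcess.
Variables (X : finType) (L T : nat) (pos : 'I_T -> 'I_L).

Lemma state_succ (s : 'I_T) (w : Omega X L T) :
  state pos s.+1 w = step pos s (state pos s w) (w.2 s).
Proof. by rewrite /= valK. Qed.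

Lemma del_state_succ (s : 'I_T) (w : Omega X L T) :
  del (pos s) (state pos s.+1 w) = del (pos s) (state pos s w).
Proof.
rewrite state_succ; apply/eq_in_map => j; rewrite mem_filter => /andP[ne _].
by rewrite ffunE (negbTE ne).
Qed.

Lemma state_succ_at (s : 'I_T) (w : Omega X L T) :
  state pos s.+1 w (pos s) = if w.2 s is Some b then b else state pos s w (pos s).
Proof. by rewrite state_succ ffunE eqxx. Qed.

Variables (R : realFieldType) (Pstar : {ffun 'I_L -> X} -> R).
Variable Pi : 'I_T -> option X -> R.

Lemma eq_Pr (E E' : pred (Omega X L T)) :
  E =1 E' -> Pr Pstar Pi E = Pr Pstar Pi E'.
Proof. exact: eq_bigl. Qed.

Lemma Pr_disjoint_or (E E' : pred (Omega X L T)) :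
  (forall w, ~~ (E w && E' w)) ->
  Pr Pstar Pi (fun w => E w || E' w) = Pr Pstar Pi E + Pr Pstar Pi E'.
Proof.
move=> disjE; rewrite /Pr big_mkcond (big_mkcond E) (big_mkcond E') -big_split /=.
apply: eq_bigr => w _; move: (disjE w).
by case: (E w); case: (E' w); rewrite ?addr0 ?add0r.
Qed.

Variable t : 'I_T.

Definition resample (z : option X) (w : Omega X L T) : Omega X L T :=
  (w.1, [ffun s => if s == t then z else w.2 s]).

Lemma resample_noise z (w : Omega X L T) : (resample z w).2 t = z.
Proof. by rewrite ffunE eqxx. Qed.

Lemma resample_resample z z' (w : Omega X L T) :
  resample z' (resample z w) = resample z' w.
Proof. by congr pair; apply/ffunP => s; rewrite !ffunE; case: (s == t). Qed.

Lemma resample_id (w : Omega X L T) : resample (w.2 t) w = w.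
Proof.
by case: w => w1 w2; congr pair; apply/ffunP => s; rewrite ffunE; case: eqP => [->|].
Qed.

Lemma state_resample k z (w : Omega X L T) :
  (k <= t)%N -> state pos k (resample z w) = state pos k w.
Proof.
elim: k => [|k IHk] le_kt //=.
case: insubP => [s _ val_s|_]; rewrite IHk ?(ltnW le_kt) //.
by rewrite ffunE; case: eqP => // s_t; rewrite -val_s s_t ltnn in le_kt.
Qed.

Lemma sum_resample (F : Omega X L T -> R) :
  \sum_(w : Omega X L T) F w =
  \sum_(w : Omega X L T | w.2 t == None) \sum_z F (resample z w).
Proof.
rewrite (partition_big (fun w : Omega X L T => w.2 t) predT) //= exchange_big /=.
apply: eq_bigr => z _.
rewrite (reindex_onto (resample z) (resample None)) /=; last first.
  by move=> w /eqP <-; rewrite resample_resample resample_id.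
apply: eq_bigl => w; rewrite resample_noise eqxx resample_resample /=.
apply/eqP/eqP => [<-|<-]; first by rewrite resample_noise.
by rewrite resample_id.
Qed.

Definition weight_off (w : Omega X L T) : R :=
  Pstar w.1 * \prod_(s | s != t) Pi s (w.2 s).

Lemma weight_resample z (w : Omega X L T) :
  weight Pstar Pi (resample z w) = Pi t z * weight_off w.
Proof.
rewrite /weight /weight_off (bigD1 t) //= ffunE eqxx mulrCA; congr (_ * (_ * _)).
by apply: eq_bigr => s /negbTE s_t; rewrite ffunE s_t.
Qed.

Hypothesis Pi_sum1 : \sum_z Pi t z = 1.

Lemma Pr_state_noise (G : {ffun 'I_L -> X} -> option X -> bool) :
  Pr Pstar Pi (fun w => G (state pos t w) (w.2 t)) =
  \sum_z Pi t z * Pr Pstar Pi (fun w => G (state pos t w) z).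
Proof.
rewrite /Pr big_mkcond sum_resample.
under [RHS]eq_bigr => z _ do rewrite big_mkcond sum_resample big_distrr.
rewrite [RHS]exchange_big /=; apply: eq_bigr => w _; apply: eq_bigr => z _.
rewrite resample_noise state_resample //.
under [in RHS]eq_bigr => z' _ do rewrite state_resample //.
case: (G _ z); last by rewrite big1 ?mulr0.
under eq_bigr => z' _ do rewrite weight_resample.
by rewrite weight_resample -big_distrl /= Pi_sum1 mul1r.
Qed.

Lemma Pr_noise_state (z : option X) (E : pred {ffun 'I_L -> X}) :
  Pr Pstar Pi (fun w => (w.2 t == z) && E (state pos t w)) =
  Pi t z * Pr Pstar Pi (fun w => E (state pos t w)).
Proof.
rewrite (Pr_state_noise (fun y z' => (z' == z) && E y)) (bigD1 z) //= big1 ?addr0.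
  by congr (_ * _); apply: eq_Pr => w; rewrite eqxx.
by move=> z' /negbTE z'z; rewrite /Pr big_pred0 ?mulr0 // => w; rewrite z'z.
Qed.

(* Pr predT is the total mass; its value cancels in lemma3. *)
Lemma Pr_noise (z : option X) :
  Pr Pstar Pi (fun w => w.2 t == z) = Pi t z * Pr Pstar Pi predT.
Proof. by rewrite -(Pr_noise_state z predT); apply: eq_Pr => w; rewrite andbT. Qed.

End ForwardProcess.

Theorem lemma3 (R : realFieldType) (X : finType) (L T : nat)
  (pos : 'I_T -> 'I_L)
  (Pstar : {ffun 'I_L -> X} -> R) (Pi : 'I_T -> option X -> R)
  (Pstar_ge0 : forall x, 0 <= Pstar x)
  (Pstar_sum1 : \sum_x Pstar x = 1)
  (Pi_ge0 : forall t z, 0 <= Pi t z)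
  (Pi_sum1 : forall t, \sum_z Pi t z = 1)
  (t : 'I_T) (x : {ffun 'I_L -> X}) (a : X) :
  let P := Pr Pstar Pi in
  let CP := cond_Pr Pstar Pi in
  let Xt := fun k (w : Omega X L T) => state pos k w in
  let Zt := fun (w : Omega X L T) => w.2 t in
  let B := fun w => del (pos t) (Xt t.+1 w) == del (pos t) x in
  let Ca := fun w => B w && (Xt t.+1 w (pos t) == a) in
  0 < P (fun w => Zt w == None) ->
  0 < P B ->
  0 < P Ca ->
  CP (fun w => Zt w == Some a) Ca != 0 ->
  CP (fun w => Xt t w (pos t) == a) B =
    P (fun w => Zt w == Some a) / P (fun w => Zt w == None) *
    ((CP (fun w => Zt w == Some a) Ca)^-1 - 1).
Proof.
move=> P CP Xt Zt B Ca; rewrite /CP /cond_Pr /P.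
have Pr_noise_Xt := Pr_noise_state pos Pstar (Pi_sum1 t).
pose D (y : {ffun 'I_L -> X}) := del (pos t) y == del (pos t) x.
pose E (y : {ffun 'I_L -> X}) := D y && (y (pos t) == a).
have Pr_B : Pr Pstar Pi B = Pr Pstar Pi (fun w => D (Xt t w)).
  by apply: eq_Pr => w; rewrite /B /Xt del_state_succ.
have Pr_XB : Pr Pstar Pi (fun w => (Xt t w (pos t) == a) && B w) =
             Pr Pstar Pi (fun w => E (Xt t w)).
  by apply: eq_Pr => w; rewrite /B /Xt del_state_succ andbC.
have Ca_split : Ca =1 fun w => (Zt w == None) && E (Xt t w) || (Zt w == Some a) && D (Xt t w).
  move=> w; rewrite /Ca /B /Xt /Zt /E del_state_succ state_succ_at.
  by case: (w.2 t) => [b|] /=; rewrite ?(inj_eq (@Some_inj _)) ?orbF // andbC.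
have Pr_Ca : Pr Pstar Pi Ca = Pi t None * Pr Pstar Pi (fun w => E (Xt t w)) +
                              Pi t (Some a) * Pr Pstar Pi (fun w => D (Xt t w)).
  rewrite (eq_Pr _ _ Ca_split) Pr_disjoint_or ?Pr_noise_Xt // => w.
  by rewrite /Zt; case: (w.2 t) => [b|] /=; rewrite ?andbF.
have Pr_ZaCa : Pr Pstar Pi (fun w => (Zt w == Some a) && Ca w) =
               Pi t (Some a) * Pr Pstar Pi (fun w => D (Xt t w)).
  by rewrite -Pr_noise_Xt; apply: eq_Pr => w; rewrite Ca_split; case: eqP => // ->.
rewrite !Pr_noise // Pr_B Pr_XB Pr_Ca Pr_ZaCa => /lt0r_neq0 N0 _ /lt0r_neq0 Ca0 ZaCa0.
by apply: odds_identity => //; move: ZaCa0; rewrite mulf_eq0 negb_or => /andP[].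
Qed.
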